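(* Let $\mathcal{R}$ be a right amenable cell space with finite stabiliser $G_0$, let $Q$ be a finite set with at least two elements, and let $\mathcal{F}=(F_i)_{i\in I}$ be a right Følner net in $\mathcal{R}$. Let $X\subseteq Q^M$ be $\triangleright$-invariant, and let $E$ be a nonempty finite subset of $G/G_0$ such that $\pi_{m_0\triangleleft E}(X)\subsetneq Q^{m_0\triangleleft E}$. Then $\mathrm{h}_{\mathcal{F}}(X)<\log|Q|$.
   Context: A cell space $\mathcal{R}$ consists of a group $G$ acting transitively on the left on a nonempty set $M$ via $\triangleright$, a point $m_0\in M$ and a family $(g_{m_0,m})_{m\in M}$ in $G$ with $g_{m_0,m}\triangleright m_0=m$. $G_0$ is the stabiliser of $m_0$ and $G/G_0$ the set of left cosets. The right semi-action $\triangleleft\colon M\times G/G_0\to M$ is $m\triangleleft gG_0=g_{m_0,m}g\triangleright m_0$; $m\triangleleft E=\{m\triangleleft e:e\in E\}$. $\mathcal{R}$ is right amenable if there is a finitely additive probability measure $\mu$ on the power set of $M$ such that $\mu(\{a\triangleleft\mathfrak{g}:a\in A\})=\mu(A)$ whenever $\mathfrak{g}\in G/G_0$, $A\subseteq M$ and $m\mapsto m\triangleleft\mathfrak{g}$ is injective on $A$. A right Følner net in $\mathcal{R}$ is a net $(F_i)_{i\in I}$ (over a directed set) of nonempty finite subsets of $M$ with $\lim_{i}\frac{|F_i\setminus\{m: m\triangleleft\mathfrak{g}\in F_i\}|}{|F_i|}=0$ for every $\mathfrak{g}\in G/G_0$. $G$ acts on patterns by $(g\triangleright p)\colon g\triangleright\mathrm{dom}(p)\to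 Q$, $m\mapsto p(g^{-1}\triangleright m)$ for $p\colon A\to Q$, $A\subseteq M$; $X\subseteq Q^M$ is $\triangleright$-invariant if $g\triangleright X\subseteq X$ for all $g\in G$. For $A\subseteq M$, $\pi_A\colon Q^M\to Q^A$ is restriction; $\mathrm{h}_{\mathcal{F}}(X)=\limsup_{i\in I}\frac{\log|\pi_{F_i}(X)|}{|F_i|}$. *)

From HB Require Import structures.
From mathcomp Require Import all_boot all_order all_algebra.
From mathcomp Require Import monoid.
From mathcomp Require Import finmap.
From mathcomp Require Import all_classical all_reals all_analysis.

Set Implicit Arguments.
Unset Strict Implicit.
Unset Printing Implicit Defensive.
Import Order.TTheory GRing.Theory Num.Theory.

Local Open Scope classical_set_scope.

Section CellSpace.
Variables (G : groupType) (M : choiceType) (act : G -> M -> M) (m0 : M)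
          (gfam : M -> G).

Definition is_left_action : Prop :=
  (forall m, act 1%g m = m) /\ (forall g h m, act (g * h)%g m = act g (act h m)).

Definition is_transitive : Prop := forall m m' : M, exists g, act g m = m'.

Record is_cell_space : Prop := IsCellSpace {
  cs_action : is_left_action;
  cs_transitive : is_transitive;
  cs_gfam : forall m, act (gfam m) m0 = m }.

Definition stab : set G := [set g | act g m0 = m0].

Definition lcoset (g : G) : set G := [set h | exists2 k, stab k & h = (g * k)%g].

Definition coset := {C : set G | exists g, C = lcoset g}.

Definition coset_of (g : G) : coset := exist _ (lcoset g) (ex_intro _ g erefl).

Definition coset_rep (C : coset) : G := projT1 (cid (proj2_sig C)).

(* The right semi-action  m <| g G_0 = g_{m0,m} g |> m0 (independent of the  *)
(* representative g of the coset).                                          *)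
Definition semi_act (m : M) (C : coset) : M := act (gfam m * coset_rep C)%g m0.

Definition right_amenable (R : realType) : Prop :=
  exists mu : set M -> R,
    [/\ (forall A, 0 <= mu A)%R,
        mu setT = 1%R,
        (forall A B, A `&` B = set0 -> mu (A `|` B) = (mu A + mu B)%R) &
        (forall (C : coset) (A : set M),
            (forall x y, A x -> A y -> semi_act x C = semi_act y C -> x = y) ->
            mu [set semi_act a C | a in A] = mu A)].

End CellSpace.

Arguments stab {G M} act m0.
Arguments lcoset {G M} act m0 g.
Arguments coset {G M} act m0.
Arguments coset_of {G M} act m0 g.
Arguments coset_rep {G M act m0} C.
Arguments semi_act {G M} act m0 gfam m C.
Arguments right_amenable {G M} act m0 gfam R.
Arguments is_cell_space {G M} act m0 gfam.

Record is_directed (I : Type) (le : I -> I -> Prop) : Prop := IsDirected {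
  dir_refl : forall i, le i i;
  dir_trans : forall i j k, le i j -> le j k -> le i k;
  dir_nonempty : inhabited I;
  dir_upper : forall i j, exists k, le i k /\ le j k }.

Definition net_cvg (R : realType) (I : Type) (le : I -> I -> Prop)
  (a : I -> R) (l : R) : Prop :=
  forall eps : R, (0 < eps)%R -> exists i0, forall i, le i0 i -> (`|a i - l| < eps)%R.

Definition net_limsup (R : realType) (I : Type) (le : I -> I -> Prop)
  (a : I -> R) : \bar R :=
  ereal_inf [set ereal_sup [set (a j)%:E | j in [set j | le i j]] | i in [set: I]].

Local Open Scope fset_scope.

Definition right_folner_net (G : groupType) (M : choiceType) (act : G -> M -> M)
  (m0 : M) (gfam : M -> G) (R : realType) (I : Type) (le : I -> I -> Prop)
  (F : I -> {fset M}) : Prop :=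
  is_directed le /\
  (forall i, F i != fset0) /\
  (forall C : coset act m0,
     net_cvg le
       (fun i => (#|` [fset m in F i | semi_act act m0 gfam m C \notin F i]|%:R
                  / #|` F i|%:R : R)%R) 0%R).

Definition restr (M Q : Type) (A : set M) (x : M -> Q) : {m : M | A m} -> Q :=
  fun m => x (proj1_sig m).

Definition npatterns (M : choiceType) (Q : finType) (X : set (M -> Q))
  (F : {fset M}) : nat :=
  #|[set p : {ffun F -> Q} | `[< exists2 x, X x & forall m : F, x (val m) = p m >] ]%SET|.

Definition entropy (R : realType) (M : choiceType) (Q : finType) (I : Type)
  (le : I -> I -> Prop) (F : I -> {fset M}) (X : set (M -> Q)) : \bar R :=
  net_limsup le (fun i => (ln (npatterns X (F i))%:R / #|` F i|%:R : R)%R).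

Definition act_invariant (G : groupType) (M Q : Type) (act : G -> M -> M)
  (X : set (M -> Q)) : Prop :=
  forall g x, X x -> X (fun m => x (act g^-1%g m)).

Arguments net_cvg {R I} le a l.
Arguments net_limsup {R I} le a.
Arguments right_folner_net {G M} act m0 gfam R {I} le F.
Arguments restr {M Q} A x _.
Arguments npatterns {M Q} X F.
Arguments entropy R {M Q I} le F X.
Arguments act_invariant {G M Q} act X.

From HB Require Import structures.
From mathcomp Require Import all_boot all_order all_algebra.
From mathcomp Require Import monoid.
From mathcomp Require Import finmap.
From mathcomp Require Import all_classical all_reals all_analysis.
From mathcomp Require Import ring lra.

Set Implicit Arguments.
Unset Strict Implicit.
Unset Printing Implicit Defensive.
Import Order.TTheory GRing.Theory Num.Theory.

(* Tile F_i by the translates t <| E of the shape m0 <| E, for t in the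
   E-interior of F_i.  By invariance of X every such tile misses a pattern, so
   j pairwise disjoint tiles cut the number of patterns on F_i by the factor
   (1 - |Q|^-|E|)^j.  A greedy choice of disjoint tiles meets every interior
   tile, and a tile meets at most |E|^2 |G_0| others, so j is proportional to
   the size of the interior, which by the Følner property is eventually at
   least half of F_i. *)

Section GreedyPacking.
Variables (T : finType) (tile : T -> {set T}).

Definition tiles_union (ts : seq T) : {set T} := \bigcup_(t <- ts) tile t.

Fixpoint disjoint_tiles (ts : seq T) : bool :=
  if ts is t :: ts' then [disjoint tile t & tiles_union ts'] && disjoint_tiles ts'
  else true.

Fixpoint greedy_packing (acc s : seq T) : seq T :=
  if s is c :: s' then
    greedy_packing (if [disjoint tile c & tiles_union acc] then c :: acc else acc) s'
  else acc.

Lemma tiles_union_cat r s : tiles_union (r ++ s) = tiles_union r :|: tiles_union s.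
Proof. by rewrite /tiles_union big_cat. Qed.

Lemma greedy_packing_suffix acc s : exists r, greedy_packing acc s = r ++ acc.
Proof.
elim: s acc => [|c s IH] acc /=; first by exists [::].
have [r ->] := IH (if [disjoint tile c & tiles_union acc] then c :: acc else acc).
by case: ifP => _; [exists (rcons r c); rewrite cat_rcons | exists r].
Qed.

Lemma greedy_packing_sub acc s : {subset greedy_packing acc s <= acc ++ s}.
Proof.
elim: s acc => [|c s IH] acc t /=; first by rewrite cats0.
case: ifP => _ /IH; rewrite !mem_cat !inE; last by case/orP => ->; rewrite ?orbT.
by case/orP => [/orP[]|] ->; rewrite ?orbT.
Qed.

Lemma disjoint_greedy_packing acc s :
  disjoint_tiles acc -> disjoint_tiles (greedy_packing acc s).
Proof.
elim: s acc => [|c s IH] acc //= Hacc; apply: IH.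
by case: ifP => //= ->.
Qed.

Lemma greedy_packing_meets acc s c :
  c \in s -> tile c != finset.set0 ->
  ~~ [disjoint tile c & tiles_union (greedy_packing acc s)].
Proof.
elim: s acc => [|d s IH] acc //=; rewrite inE => /orP [/eqP <- | cs] Hc; last exact: IH.
set acc' := (if _ then _ else _).
have [r ->] := greedy_packing_suffix acc' s.
rewrite tiles_union_cat -finset.setI_eq0 finset.setIUr finset.setU_eq0 negb_and.
rewrite finset.setI_eq0.
apply/orP; right; rewrite /acc'; case: ifP => [_|H]; last by rewrite finset.setI_eq0 H.
by rewrite /tiles_union big_cons finset.setIUr finset.setIid finset.setU_eq0 negb_and Hc.
Qed.

Definition tile_neighbours (t : T) : {set T} := [set u | ~~ [disjoint tile u & tile t]].

Lemma meets_tiles_union ts u :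
  ~~ [disjoint tile u & tiles_union ts] -> u \in \bigcup_(t <- ts) tile_neighbours t.
Proof.
elim: ts => [|t ts IH].
  by rewrite /tiles_union big_nil -finset.setI_eq0 finset.setI0 eqxx.
rewrite /tiles_union !big_cons -/(tiles_union ts) finset.in_setU.
rewrite -finset.setI_eq0 finset.setIUr finset.setU_eq0 negb_and !finset.setI_eq0.
case/orP => [H|/IH ->].
  by rewrite inE H.
by rewrite orbT.
Qed.

Lemma card_meeting_tiles_le (A : {set T}) ts (N : nat) :
  (forall u, u \in A -> ~~ [disjoint tile u & tiles_union ts]) ->
  (forall t, #|tile_neighbours t| <= N)%N ->
  (#|A| <= size ts * N)%N.
Proof.
move=> Hmeet HN.
apply: (@leq_trans #|\bigcup_(t <- ts) tile_neighbours t|).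
  by apply/subset_leq_card/fintype.subsetP => u /Hmeet /meets_tiles_union.
apply: (leq_trans (unstable.card_big_setU _ _ _)).
apply: (@leq_trans (\sum_(t <- ts) N)); first exact: leq_sum.
by rewrite big_const_seq count_predT iter_addn_0 mulnC.
Qed.

End GreedyPacking.

Section PaddedPatterns.
Variables (M : choiceType) (Q : finType) (q0 : Q) (X : set (M -> Q)) (F : {fset M}).

Definition patterns_on (S : {set F}) : {set {ffun F -> Q}} :=
  [set p : {ffun F -> Q} | `[< exists2 x, X x &
     forall m : F, p m = if m \in S then x (fsval m) else q0 >] ].

Lemma npatterns_patterns_onT : npatterns X F = #|patterns_on [set: F]|.
Proof.
apply: eq_card => p; rewrite !inE.
by apply/asboolP/asboolP => -[x Xx Hx]; exists x => // m; rewrite Hx inE.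
Qed.

Lemma card_patterns_onU (S1 S2 : {set F}) :
  (#|patterns_on (S1 :|: S2)| <= #|patterns_on S1| * #|patterns_on S2|)%N.
Proof.
pose glue (pq : {ffun F -> Q} * {ffun F -> Q}) : {ffun F -> Q} :=
  [ffun m => if m \in S1 then pq.1 m else pq.2 m].
rewrite -cardsX; apply: (leq_trans _ (leq_imset_card glue _)).
apply/subset_leq_card/fintype.subsetP => p; rewrite inE => /asboolP [x Xx Hp].
apply/imsetP; exists ([ffun m => if m \in S1 then x (fsval m) else q0],
                      [ffun m => if m \in S2 then x (fsval m) else q0]).
  by rewrite !inE /=; apply/andP; split; apply/asboolP; exists x => // m; rewrite ffunE.
apply/ffunP => m; rewrite /glue !ffunE Hp /= finset.in_setU.
by case: (m \in S1) => //=; rewrite ffunE.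
Qed.

Lemma patterns_on_pffun_on (S : {set F}) : patterns_on S \subset pffun_on q0 S predT.
Proof.
apply/fintype.subsetP => p; rewrite inE => /asboolP [x _ Hp].
apply/pffun_onP; split=> // ; apply/fintype.subsetP => m.
by rewrite inE Hp; case: ifP => // _; rewrite eqxx.
Qed.

Lemma card_patterns_on_le (S : {set F}) : (#|patterns_on S| <= #|Q| ^ #|S|)%N.
Proof. by rewrite -(card_pffun_on q0 S predT) subset_leq_card ?patterns_on_pffun_on. Qed.

Lemma card_patterns_on_lt (S : {set F}) (f : {ffun F -> Q}) :
  f \in pffun_on q0 S predT -> f \notin patterns_on S ->
  (#|patterns_on S| < #|Q| ^ #|S|)%N.
Proof.
move=> fS fNS; rewrite -(card_pffun_on q0 S predT); apply: proper_card.
by apply/properP; split; [exact: patterns_on_pffun_on | exists f].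
Qed.

Variable R : realType.
Local Open Scope ring_scope.

Lemma card_patterns_on_le_factor (S : {set F}) (N : nat) :
  (#|patterns_on S| < #|Q| ^ #|S|)%N -> (#|S| <= N)%N ->
  #|patterns_on S|%:R <= #|Q|%:R ^+ #|S| * (1 - (#|Q|%:R ^+ N)^-1) :> R.
Proof.
move=> Hlt HN; have Q0 : (0 < #|Q|)%N by apply/card_gt0P; exists q0.
have qN0 : 0 < #|Q|%:R ^+ N :> R by rewrite exprn_gt0 ?ltr0n.
have : (#|patterns_on S| <= #|Q| ^ #|S| - 1)%N.
  by rewrite leq_subRL ?add1n // expn_gt0 Q0.
rewrite -(ler_nat R) => /le_trans; apply.
rewrite natrB ?expn_gt0 ?Q0 // natrX mulrBr mulr1 lerB // ler_pdivrMr // mul1r.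
by rewrite -!natrX ler_nat leq_pexp2l.
Qed.

Variable tile : F -> {set F}.

Lemma card_patterns_tiles_le (N : nat) (ts : seq F) :
  (forall t, t \in ts -> (#|patterns_on (tile t)| < #|Q| ^ #|tile t|)%N /\
                         (#|tile t| <= N)%N) ->
  disjoint_tiles tile ts ->
  #|patterns_on (tiles_union tile ts)|%:R <=
    #|Q|%:R ^+ #|tiles_union tile ts| * (1 - (#|Q|%:R ^+ N)^-1) ^+ size ts :> R.
Proof.
have Q0 : (0 < #|Q|)%N by apply/card_gt0P; exists q0.
elim: ts => [|t ts IH] Hts /=.
  by rewrite expr0 mulr1 -natrX ler_nat card_patterns_on_le.
case/andP=> Hdis Hdisj; have [Htile HtN] := Hts t (mem_head _ _).
rewrite /tiles_union big_cons -/(tiles_union tile ts).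
rewrite cardsU (disjoint_setI0 Hdis) cards0 subn0 exprD exprS mulrACA.
apply: le_trans
  (_ : (#|patterns_on (tile t)| * #|patterns_on (tiles_union tile ts)|)%:R <= _).
  by rewrite ler_nat card_patterns_onU.
rewrite natrM ler_pM //; first exact: card_patterns_on_le_factor.
by apply: IH => // u uts; apply: Hts; rewrite inE uts orbT.
Qed.

Lemma card_patterns_packing (cand : {set F}) (N Nb : nat) :
  (forall c, c \in cand -> [/\ (#|patterns_on (tile c)| < #|Q| ^ #|tile c|)%N,
                               (#|tile c| <= N)%N & tile c != finset.set0]) ->
  (forall t, #|tile_neighbours tile t| <= Nb)%N ->
  exists j : nat, (#|cand| <= j * Nb)%N /\
    (npatterns X F)%:R <= #|Q|%:R ^+ #|` F| * (1 - (#|Q|%:R ^+ N)^-1) ^+ j :> R.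
Proof.
move=> Hcand HNb; set ts := greedy_packing tile [::] (enum cand).
have ts_cand t : t \in ts -> t \in cand.
  by move/greedy_packing_sub; rewrite mem_enum.
exists (size ts); split.
  apply: card_meeting_tiles_le HNb => c cc.
  by apply: greedy_packing_meets; [rewrite mem_enum | case: (Hcand c cc)].
have Hts : #|patterns_on (tiles_union tile ts)|%:R <=
    #|Q|%:R ^+ #|tiles_union tile ts| * (1 - (#|Q|%:R ^+ N)^-1) ^+ size ts :> R.
  apply: card_patterns_tiles_le; last exact: disjoint_greedy_packing.
  by move=> t /ts_cand /Hcand [].
rewrite npatterns_patterns_onT -(finset.setUCr (tiles_union tile ts)) cardfE.
apply: le_trans (_ : (#|patterns_on (tiles_union tile ts)| *
                      #|patterns_on (~: tiles_union tile ts)|)%:R <= _).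
  by rewrite ler_nat card_patterns_onU.
rewrite natrM -(cardsC (tiles_union tile ts)) exprD mulrAC ler_pM //.
by rewrite -natrX ler_nat card_patterns_on_le.
Qed.

End PaddedPatterns.

Local Open Scope classical_set_scope.

Lemma finite_set_enum (T : Type) (A : set T) : finite_set A ->
  exists n (f : 'I_n -> T), forall a, A a -> exists k, f k = a.
Proof.
case=> n /card_bijP [g [g' gK _]].
have In_ord (k : 'I_n) : `I_n (nat_of_ord k) by rewrite /= ltn_ord.
exists n, (fun k => val (g' (SigSub (mem_set (In_ord k))))) => a Aa.
set v := g (SigSub (mem_set Aa)); have vn : (val v < n)%N by have := set_valP v.
exists (Ordinal vn) => /=.
have -> : SigSub (mem_set (In_ord (Ordinal vn))) = v by apply: val_inj.
by rewrite /v gK.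
Qed.

Lemma card_fsub_le_param (K : choiceType) (F : {fset K}) (A : {set F})
    (Z : finType) (phi : Z -> K) :
  (forall y, y \in A -> exists z, fsval y = phi z) -> (#|A| <= #|Z|)%N.
Proof.
move=> Hphi; have [->|[y0 _]] := set_0Vmem A; first by rewrite cards0.
apply: (leq_trans _ (max_card (mem (predT : {pred Z})))).
apply: (leq_trans _ (leq_imset_card (fun z => insubd y0 (phi z)) predT)).
apply/subset_leq_card/fintype.subsetP => y yA; have [z yz] := Hphi y yA.
by apply/imsetP; exists z => //; apply: val_inj; rewrite val_insubd -yz fsvalP.
Qed.

Section CellSpaceTiles.
Variables (G : groupType) (M : choiceType) (act : G -> M -> M) (m0 : M) (gfam : M -> G).
Hypothesis act1 : forall m, act 1%g m = m.
Hypothesis actM : forall g h m, act (g * h)%g m = act g (act h m).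
Hypothesis gfamP : forall m, act (gfam m) m0 = m.

Local Notation sa := (semi_act act m0 gfam).

Lemma semi_act_translate t C : act (gfam t * (gfam m0)^-1)%g (sa m0 C) = sa t C.
Proof. by rewrite /semi_act -actM -mulgA mulKg. Qed.

Variables (E : set (coset act m0)) (nE : nat) (eN : 'I_nE -> coset act m0).
Hypothesis eN_surj : forall e, E e -> exists a, eN a = e.
Variables (nS : nat) (sN : 'I_nS -> G).
Hypothesis sN_surj : forall s, stab act m0 s -> exists k, sN k = s.
Variable F : {fset M}.

Definition shift_tile (t : F) : {set F} :=
  [set y : F | [exists a : 'I_nE, fsval y == sa (fsval t) (eN a)]].

Definition interior : {set F} :=
  [set m : F | [forall a : 'I_nE, sa (fsval m) (eN a) \in F]].

Lemma card_shift_tile_le t : (#|shift_tile t| <= nE)%N.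
Proof.
rewrite -[X in (_ <= X)%N](card_ord nE).
apply: (card_fsub_le_param (phi := fun a => sa (fsval t) (eN a))) => y.
by rewrite inE => /existsP [a /eqP ->]; exists a.
Qed.

Lemma shift_tile_neq0 (a : 'I_nE) t : t \in interior -> shift_tile t != finset.set0.
Proof.
rewrite inE => /forallP /(_ a) taF.
by apply/set0Pn; exists (FSetSub taF); rewrite inE; apply/existsP; exists a.
Qed.

(* If the tiles of m and t share y = m <| eN a = t <| eN b, then
   (gfam y)^-1 * gfam m * rep (eN a) stabilises m0, so m is determined by a, b
   and an element of the stabiliser. *)
Lemma card_tile_neighbours_le t :
  (#|tile_neighbours shift_tile t| <= nE * nE * nS)%N.
Proof.
have -> : (nE * nE * nS = #|{: 'I_nE * 'I_nE * 'I_nS}|)%N by rewrite !card_prod !card_ord.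
apply: (card_fsub_le_param (phi := fun z : 'I_nE * 'I_nE * 'I_nS =>
   act (gfam (sa (fsval t) (eN z.1.2)) * sN z.2 * (coset_rep (eN z.1.1))^-1)%g m0)).
move=> m; rewrite inE -finset.setI_eq0 => /set0Pn [y].
rewrite finset.in_setI !inE => /andP [/existsP [a /eqP ya] /existsP [b /eqP yb]].
have st : stab act m0 ((gfam (fsval y))^-1 * (gfam (fsval m) * coset_rep (eN a)))%g.
  rewrite /stab /= actM; have -> : act (gfam (fsval m) * coset_rep (eN a))%g m0 = fsval y.
    by rewrite ya.
  by rewrite -{2}(gfamP (fsval y)) -actM mulVg act1.
have [c hc] := sN_surj st; exists (a, b, c) => /=.
by rewrite -yb hc mulVKg mulgK gfamP.
Qed.

Variables (Q : finType) (q0 : Q) (X : set (M -> Q)).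
Hypothesis X_invariant : act_invariant act X.
Let K := [set sa m0 e | e in E].
Variable p : {m : M | K m} -> Q.
Hypothesis p_forbidden : ~ exists2 x, X x & restr K x = p.

(* Moving the forbidden pattern p from m0 <| E to t <| E with the element
   gfam t * (gfam m0)^-1 gives a pattern on the tile that no element of the
   invariant set X can display. *)
Lemma card_patterns_shift_tile_lt t :
  t \in interior -> (#|patterns_on q0 X (shift_tile t)| < #|Q| ^ #|shift_tile t|)%N.
Proof.
move=> tF; set h := (gfam (fsval t) * (gfam m0)^-1)%g.
pose moved (y : F) : Q := if pselect (K (act h^-1 (fsval y))) is left Ky
  then p (exist _ _ Ky) else q0.
apply: (@card_patterns_on_lt _ _ _ _ _ _
          [ffun y => if y \in shift_tile t then moved y else q0]).
  apply/pffun_onP; split=> //; apply/fintype.subsetP => y.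
  by rewrite inE ffunE; case: ifP => // _; rewrite eqxx.
rewrite inE; apply/negP => /asboolP [x Xx Hx]; apply: p_forbidden.
exists (fun m => x (act h^-1^-1 m)); first exact: X_invariant.
apply: funext => -[v Kv]; rewrite /restr /= invgK.
have [a Ea va] := Kv; have [a' aa'] := eN_surj Ea; subst v; rewrite -aa' in Kv *.
have taF : sa (fsval t) (eN a') \in F by move: tF; rewrite inE => /forallP.
have ytile : FSetSub taF \in shift_tile t by rewrite inE; apply/existsP; exists a'.
rewrite semi_act_translate; have := Hx (FSetSub taF); rewrite ffunE ytile /= => <-.
have back : act h^-1 (sa (fsval t) (eN a')) = sa m0 (eN a').
  by rewrite -semi_act_translate -actM mulVg act1.
rewrite /moved /=; case: pselect => [Ky|]; last by rewrite back.
by congr p; apply: eq_exist; rewrite back.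
Qed.

Local Open Scope ring_scope.

Lemma card_npatterns_interior (R : realType) (a : 'I_nE) :
  exists j : nat, (#|interior| <= j * (nE * nE * nS))%N /\
    (npatterns X F)%:R <= #|Q|%:R ^+ #|` F| * (1 - (#|Q|%:R ^+ nE)^-1) ^+ j :> R.
Proof.
apply: card_patterns_packing => [c cF|]; last exact: card_tile_neighbours_le.
split; [exact: card_patterns_shift_tile_lt | exact: card_shift_tile_le |].
exact: shift_tile_neq0 a c cF.
Qed.

End CellSpaceTiles.

Lemma directed_eventually_forall (I : Type) (le : I -> I -> Prop) (A : finType)
    (P : A -> I -> Prop) :
  is_directed le -> (forall a, exists i0, forall i, le i0 i -> P a i) ->
  exists i0, forall i, le i0 i -> forall a, P a i.
Proof.
move=> Hdir HP.
suff [i0 Hi0] : exists i0, forall i, le i0 i -> forall a, a \in enum A -> P a i.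
  by exists i0 => i /Hi0 Hi a; apply: Hi; rewrite mem_enum.
elim: (enum A) => [|a s [i1 H1]]; first by case: (dir_nonempty Hdir) => i; exists i.
have [i2 H2] := HP a; have [k [k1 k2]] := dir_upper Hdir i1 i2.
exists k => i ki b; rewrite inE => /orP [/eqP -> | bs].
  exact: H2 (dir_trans Hdir k2 ki).
exact: H1 (dir_trans Hdir k1 ki) _ bs.
Qed.

Local Open Scope ring_scope.

(* A point of F i outside the interior leaves F i under one of the nE shifts,
   and eventually each shift moves at most a fraction (2 * nE.+1)^-1 of F i out. *)
Lemma folner_interior (R : realType) (G : groupType) (M : choiceType)
    (act : G -> M -> M) (m0 : M) (gfam : M -> G) (I : Type) (le : I -> I -> Prop)
    (F : I -> {fset M}) (nE : nat) (eN : 'I_nE -> coset act m0) :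
  right_folner_net act m0 gfam R le F ->
  exists i0, forall i, le i0 i -> #|` F i|%:R <= 2 * #|interior gfam eN (F i)|%:R :> R.
Proof.
case=> Hdir [F_neq0 Hcvg]; pose eps : R := (2 * nE.+1%:R)^-1.
have eps_gt0 : 0 < eps by rewrite invr_gt0 mulr_gt0 // ltr0n.
have [i0 Hi0] := directed_eventually_forall Hdir (fun a => Hcvg (eN a) eps eps_gt0).
exists i0 => i /Hi0 Hi; set n := #|` F i|.
have n_gt0 : 0 < n%:R :> R by rewrite ltr0n cardfs_gt0 F_neq0.
pose exits a : {set F i} :=
  [set m : F i | semi_act act m0 gfam (fsval m) (eN a) \notin F i]%SET.
have card_exits a : #|exits a|%:R <= eps * n%:R :> R.
  have -> : #|exits a| =
      #|` [fset m in F i | semi_act act m0 gfam m (eN a) \notin F i]%fset|.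
    rewrite -(card_fsub (fset_sub _ _)); apply: eq_card => m.
    by rewrite !inE fsvalP.
  by move: (Hi a); rewrite subr0 => /ltW; rewrite ger0_norm ?divr_ge0 // ler_pdivrMr.
have card_exterior : #|~: interior gfam eN (F i)|%:R <= n%:R / 2 :> R.
  apply: le_trans (_ : (\sum_(a < nE) #|exits a|)%:R <= _).
    rewrite ler_nat; apply: leq_trans (unstable.card_big_setU _ predT exits).
    apply/subset_leq_card/fintype.subsetP => m; rewrite !inE negb_forall.
    by case/existsP => a ha; apply/bigcupP; exists a; rewrite ?inE.
  rewrite natr_sum; apply: le_trans (ler_sum _ (fun a _ => card_exits a)) _.
  rewrite sumr_const card_ord -mulr_natr.
  have eps_nE : eps * (2 * (nE%:R + 1)) = 1 by rewrite natr1 mulVf ?mulf_neq0 ?pnatr_eq0.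
  have := mulr_gt0 eps_gt0 n_gt0; nra.
have n_split : n%:R = #|interior gfam eN (F i)|%:R + #|~: interior gfam eN (F i)|%:R :> R.
  by rewrite -natrD /n cardfE cardsC.
lra.
Qed.

Lemma ln_div_le_packing_rate (R : realType) (Np n j Nb : nat) (q rho : R) :
  1 < q -> 0 < rho <= 1 -> (0 < n)%N -> (0 < Nb)%N ->
  n%:R <= 2 * (j * Nb)%:R :> R -> Np%:R <= q ^+ n * rho ^+ j ->
  ln (Np%:R : R) / n%:R <= Num.max 0 (ln q + ln rho / (2 * Nb%:R)).
Proof.
move=> q_gt1 /andP [rho_gt0 rho_le1] n_gt0 Nb_gt0 hn hNp.
have [->|Np_neq0] := eqVneq Np 0%N; first by rewrite ln0 // mul0r le_max lexx.
have q_gt0 : 0 < q by apply: lt_trans q_gt1.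
rewrite le_max; apply/orP; right; rewrite ler_pdivrMr ?ltr0n //.
have ln_Np : ln (Np%:R : R) <= n%:R * ln q + j%:R * ln rho.
  rewrite !mulr_natl -(lnXn _ q_gt0) -(lnXn _ rho_gt0) -lnM ?posrE ?exprn_gt0 //.
  by rewrite ler_ln ?posrE ?mulr_gt0 ?exprn_gt0 ?ltr0n ?lt0n.
apply: (le_trans ln_Np); rewrite mulrDl [n%:R * _]mulrC lerD2l.
set w := ln rho / (2 * Nb%:R).
have Nb2_gt0 : 0 < 2 * Nb%:R :> R by rewrite mulr_gt0 ?ltr0n.
have ln_rho : ln rho = w * (2 * Nb%:R) by rewrite /w mulfVK // lt0r_neq0.
have w_le0 : w <= 0 by rewrite /w pmulr_lle0 ?invr_gt0 // ln_le0.
rewrite natrM in hn; rewrite ln_rho; nra.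
Qed.

Lemma packing_rate_lt_ln (R : realType) (Nb : nat) (q rho : R) :
  1 < q -> 0 < rho < 1 -> (0 < Nb)%N ->
  Num.max 0 (ln q + ln rho / (2 * Nb%:R)) < ln q.
Proof.
move=> q_gt1 /andP [rho_gt0 rho_lt1] Nb_gt0.
rewrite gt_max ln_gt0 //= -ltrBrDl subrr pmulr_llt0 ?ln_lt0 ?rho_gt0 //.
by rewrite invr_gt0 mulr_gt0 ?ltr0n.
Qed.

Lemma net_limsup_le (R : realType) (I : Type) (le : I -> I -> Prop) (a : I -> R) (c : R) :
  (exists i0, forall i, le i0 i -> a i <= c) -> (net_limsup le a <= c%:E)%E.
Proof.
case=> i0 Hi0; apply: le_trans (ereal_inf_lbound _) _; first by exists i0.
by apply/ereal_supP => _ [i hi <-]; rewrite lee_fin Hi0.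
Qed.

Local Close Scope ring_scope.

Theorem corollary2 (R : realType) (G : groupType) (M : choiceType)
  (act : G -> M -> M) (m0 : M) (gfam : M -> G)
  (Hcs : is_cell_space act m0 gfam)
  (Hamen : right_amenable act m0 gfam R)
  (Hstab : finite_set (stab act m0))
  (Q : finType) (HQ : (1 < #|Q|)%N)
  (I : Type) (le : I -> I -> Prop) (F : I -> {fset M})
  (HF : right_folner_net act m0 gfam R le F)
  (X : set (M -> Q)) (HX : act_invariant act X)
  (E : set (coset act m0)) (HEfin : finite_set E) (HE0 : E !=set0)
  (HEproper : ~ (forall p : {m : M | [set semi_act act m0 gfam m0 e | e in E] m} -> Q,
                   exists2 x, X x & restr [set semi_act act m0 gfam m0 e | e in E] x = p)) :
  (entropy R le F X < (ln (#|Q|%:R : R))%:E)%E.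
Proof.
case: Hcs => [[act1 actM] _ gfamP].
have [nE [eN eN_surj]] := finite_set_enum HEfin.
have [nS [sN sN_surj]] := finite_set_enum Hstab.
have [e /eN_surj [a _]] := HE0.
have [s _] := sN_surj _ (act1 m0).
have [q0 _] := card_gt0P (ltnW HQ).
have /existsNP [p p_forbidden] := HEproper.
pose Nb := (nE * nE * nS)%N; pose rho : R := (1 - (#|Q|%:R ^+ nE)^-1)%R.
have q_gt1 : (1 < #|Q|%:R :> R)%R by rewrite ltr1n.
have nE_gt0 : (0 < nE)%N by apply: leq_ltn_trans (ltn_ord a).
have Nb_gt0 : (0 < Nb)%N by rewrite !muln_gt0 nE_gt0; apply: leq_ltn_trans (ltn_ord s).
have qnE_gt1 : (1 < #|Q|%:R ^+ nE :> R)%R by rewrite exprn_egt1 // -lt0n.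
have rho_bounds : (0 < rho < 1)%R.
  have qnE_gt0 := lt_trans ltr01 qnE_gt1.
  by rewrite /rho subr_gt0 invf_lt1 // qnE_gt1 /= ltrBlDr ltrDl invr_gt0.
have [i0 Hi0] := folner_interior eN HF.
apply: le_lt_trans (net_limsup_le _) _; last first.
  by rewrite lte_fin; apply: (packing_rate_lt_ln q_gt1 rho_bounds Nb_gt0).
exists i0 => i /Hi0 Hint.
have [j [Hj HNp]] :=
  card_npatterns_interior act1 actM gfamP eN_surj sN_surj (F i) q0 HX p_forbidden R a.
apply: ln_div_le_packing_rate HNp => //.
- by case/andP: rho_bounds => -> /ltW ->.
- by case: HF => _ [F_neq0 _]; rewrite cardfs_gt0.
- by apply: (le_trans Hint); rewrite ler_pM2l ?ler_nat.
Qed.
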